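(* For every $\mathrm{PTL}\times\mathbf{S5}$ formula $\varphi$, let $t_1(\varphi)$ be the $\mathrm{SLTL}$ formula obtained from $\varphi$ by replacing every occurrence of $\Diamond$ by $\Diamond_{*}$ and every occurrence of $\Box$ by $\Box_{*}$. Then $\varphi$ is $\mathrm{PTL}\times\mathbf{S5}$-satisfiable if and only if $t_1(\varphi)$ is $\mathrm{SLTL}$-satisfiable.
   Context: Fix a countably infinite set $\mathcal{P}$ of propositional variables and a countably infinite set $\mathcal{S}$ of standpoint symbols containing a distinguished universal standpoint symbol $*$. SLTL: formulae are given by $\varphi ::= p \mid s \preceq s' \mid \neg\varphi \mid \varphi\wedge\varphi \mid \Diamond_s\varphi \mid \Box_s\varphi \mid X\varphi \mid \varphi\,U\,\varphi$ with $p\in\mathcal{P}$, $s,s'\in\mathcal{S}$. A model is $M=(\Pi,\lambda)$ where $\Pi\neq\emptyset$ is a set of traces $\sigma:\mathbb{N}\to 2^{\mathcal{P}}$ and $\lambda:\mathcal{S}\to 2^{\Pi}\setminus\{\emptyset\}$ with $\lambda( * )=\Pi$. For $\sigma\in\Pi$, $i\in\mathbb{N}$: $M,\sigma,i\models p$ iff $p\in\sigma(i)$; $M,\sigma,i\models s\preceq s'$ iff $\lambda(s)\subseteq\lambda(s')$; Boolean clauses as usual; $M,\sigma,i\models\Diamond_s\psi$ iff $M,\sigma',i\models\psi$ for some $\sigma'\in\lambda(s)$; $M,\sigma,i\models\Box_s\psi$ iff $M,\sigma',i\models\psi$ for all $\sigma'\in\lambda(s)$; $M,\sigma,i\models X\psi$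 iff $M,\sigma,i+1\models\psi$; $M,\sigma,i\models\psi\,U\,\chi$ iff there is $i'\ge i$ with $M,\sigma,i'\models\chi$ and $M,\sigma,i''\models\psi$ for all $i\le i''<i'$. A formula $\varphi$ is SLTL-satisfiable iff there exist a model $M=(\Pi,\lambda)$ and $\sigma\in\Pi$ with $M,\sigma,0\models\varphi$. $\mathrm{PTL}\times\mathbf{S5}$: formulae are given by $\varphi ::= p \mid \neg\varphi\mid\varphi\wedge\varphi\mid\Diamond\varphi\mid\Box\varphi\mid X\varphi\mid\varphi\,U\,\varphi$. A model is $M=(\mathbb{N}\times W,R,L)$ with $W\neq\emptyset$, $R$ an equivalence relation on $W$, and $L:\mathbb{N}\times W\to 2^{\mathcal{P}}$. Semantics: $M,(n,w)\models p$ iff $p\in L(n,w)$; Boolean clauses as usual; $M,(n,w)\models\Diamond\psi$ iff $M,(n,w')\models\psi$ for some $w'$ with $wRw'$; $M,(n,w)\models\Box\psi$ iff $M,(n,w')\models\psi$ for all $w'$ with $wRw'$; $M,(n,w)\models X\psi$ iff $M,(n+1,w)\models\psi$; $M,(n,w)\models\psi\,U\,\chi$ iff there is $n'\ge n$ with $M,(n',w)\models\chi$ and $M,(n'',w)\models\psi$ for all $n\le n''<n'$. A formula is satisfiable iff it holds at some $(n,w)$ of some model. *)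

From Stdlib Require Import Arith.

(* Propositional variables: nat (countably infinite).
   Standpoint symbols: nat (countably infinite); the universal standpoint * is 0. *)
Definition pvar := nat.
Definition stand := nat.
Definition star : stand := 0.

Inductive sltl : Type :=
| SVar : pvar -> sltl
| SSub : stand -> stand -> sltl
| SNeg : sltl -> sltl
| SAnd : sltl -> sltl -> sltl
| SDia : stand -> sltl -> sltl
| SBox : stand -> sltl -> sltl
| SNext : sltl -> sltl
| SUntil : sltl -> sltl -> sltl.

(* A trace σ : ℕ → 2^P, with subsets of P represented as predicates. *)
Definition trace := nat -> pvar -> Prop.

Record sltl_model := {
  Pi : trace -> Prop;
  lam : stand -> trace -> Prop;
  Pi_nonempty : exists s, Pi s;
  lam_sub : forall s t, lam s t -> Pi t;
  lam_nonempty : forall s, exists t, lam s t;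
  lam_star : forall t, lam star t <-> Pi t
}.

Fixpoint sltl_sat (M : sltl_model) (sg : trace) (i : nat) (f : sltl) : Prop :=
  match f with
  | SVar p => sg i p
  | SSub s s' => forall t, lam M s t -> lam M s' t
  | SNeg g => ~ sltl_sat M sg i g
  | SAnd g h => sltl_sat M sg i g /\ sltl_sat M sg i h
  | SDia s g => exists t, lam M s t /\ sltl_sat M t i g
  | SBox s g => forall t, lam M s t -> sltl_sat M t i g
  | SNext g => sltl_sat M sg (S i) g
  | SUntil g h => exists i', i <= i' /\ sltl_sat M sg i' h /\
                   forall i'', i <= i'' < i' -> sltl_sat M sg i'' g
  end.

Definition sltl_satisfiable (f : sltl) : Prop :=
  exists (M : sltl_model) (sg : trace), Pi M sg /\ sltl_sat M sg 0 f.

Inductive ptl5 : Type :=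
| PVar : pvar -> ptl5
| PNeg : ptl5 -> ptl5
| PAnd : ptl5 -> ptl5 -> ptl5
| PDia : ptl5 -> ptl5
| PBox : ptl5 -> ptl5
| PNext : ptl5 -> ptl5
| PUntil : ptl5 -> ptl5 -> ptl5.

Record s5_model := {
  W : Type;
  W_nonempty : inhabited W;
  R : W -> W -> Prop;
  R_refl : forall w, R w w;
  R_sym : forall w v, R w v -> R v w;
  R_trans : forall w v u, R w v -> R v u -> R w u;
  L : nat -> W -> pvar -> Prop
}.

Fixpoint ptl5_sat (M : s5_model) (n : nat) (w : W M) (f : ptl5) : Prop :=
  match f with
  | PVar p => L M n w p
  | PNeg g => ~ ptl5_sat M n w g
  | PAnd g h => ptl5_sat M n w g /\ ptl5_sat M n w h
  | PDia g => exists w', R M w w' /\ ptl5_sat M n w' g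
  | PBox g => forall w', R M w w' -> ptl5_sat M n w' g
  | PNext g => ptl5_sat M (S n) w g
  | PUntil g h => exists n', n <= n' /\ ptl5_sat M n' w h /\
                   forall n'', n <= n'' < n' -> ptl5_sat M n'' w g
  end.

Definition ptl5_satisfiable (f : ptl5) : Prop :=
  exists (M : s5_model) (n : nat) (w : W M), ptl5_sat M n w f.

Fixpoint t1 (f : ptl5) : sltl :=
  match f with
  | PVar p => SVar p
  | PNeg g => SNeg (t1 g)
  | PAnd g h => SAnd (t1 g) (t1 h)
  | PDia g => SDia star (t1 g)
  | PBox g => SBox star (t1 g)
  | PNext g => SNext (t1 g)
  | PUntil g h => SUntil (t1 g) (t1 h)
  end.

From Stdlib Require Import Arith Lia.

(* The translation t1 phi mentions only the universal standpoint, so its truth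
   in an SLTL model depends on the set of traces Pi alone; and a set of traces
   is an S5 model with a single equivalence class whose worlds are the traces,
   labelled by the traces themselves.  Conversely, the equivalence class of the
   evaluation world (n, w) of a PTLxS5 model, read from time n onwards, is such
   a set of traces, and PTLxS5 truth is invariant under this shifting and
   restriction because they form a bisimulation. *)

Lemma until_shift (P Q : nat -> Prop) (n i : nat) :
  (exists n', n + i <= n' /\ Q n' /\ forall n'', n + i <= n'' < n' -> P n'') <->
  (exists i', i <= i' /\ Q (n + i') /\ forall i'', i <= i'' < i' -> P (n + i'')).
Proof.
  split.
  - intros [n' [Hle [HQ HP]]]. exists (n' - n). split; [lia|]. split.
    + replace (n + (n' - n)) with n' by lia. exact HQ.
    + intros i'' Hi. apply HP. lia.
  - intros [i' [Hle [HQ HP]]]. exists (n + i'). split; [lia|]. split; [exact HQ|].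
    intros n'' Hn. replace n'' with (n + (n'' - n)) by lia. apply HP. lia.
Qed.

Section Bisimulation.

Variables M N : s5_model.
Variable shift : nat.
Variable Z : W M -> W N -> Prop.
Hypothesis Z_label :
  forall v x i p, Z v x -> (L N i x p <-> L M (shift + i) v p).
Hypothesis Z_forth :
  forall v x v', Z v x -> R M v v' -> exists x', R N x x' /\ Z v' x'.
Hypothesis Z_back :
  forall v x x', Z v x -> R N x x' -> exists v', R M v v' /\ Z v' x'.

Lemma ptl5_sat_bisim (f : ptl5) : forall v x i,
  Z v x -> (ptl5_sat M (shift + i) v f <-> ptl5_sat N i x f).
Proof.
  induction f as [p | g IHg | g IHg h IHh | g IHg | g IHg | g IHg | g IHg h IHh];
    intros v x i HZ; simpl.
  - symmetry. apply Z_label. exact HZ.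
  - rewrite (IHg v x i HZ). tauto.
  - rewrite (IHg v x i HZ), (IHh v x i HZ). tauto.
  - split.
    + intros [v' [Hvv' Hg]]. destruct (Z_forth v x v' HZ Hvv') as [x' [Hxx' HZ']].
      exists x'. split; [exact Hxx'|]. apply (IHg v' x' i HZ'). exact Hg.
    + intros [x' [Hxx' Hg]]. destruct (Z_back v x x' HZ Hxx') as [v' [Hvv' HZ']].
      exists v'. split; [exact Hvv'|]. apply (IHg v' x' i HZ'). exact Hg.
  - split.
    + intros Hg x' Hxx'. destruct (Z_back v x x' HZ Hxx') as [v' [Hvv' HZ']].
      apply (IHg v' x' i HZ'). apply Hg. exact Hvv'.
    + intros Hg v' Hvv'. destruct (Z_forth v x v' HZ Hvv') as [x' [Hxx' HZ']].
      apply (IHg v' x' i HZ'). apply Hg. exact Hxx'.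
  - rewrite <- Nat.add_succ_r. apply IHg. exact HZ.
  - rewrite until_shift.
    split; intros [i' [Hle [Hh Hg]]]; exists i'; (split; [exact Hle|]); split.
    + apply (IHh v x i' HZ). exact Hh.
    + intros i'' Hi. apply (IHg v x i'' HZ). apply Hg. exact Hi.
    + apply (IHh v x i' HZ). exact Hh.
    + intros i'' Hi. apply (IHg v x i'' HZ). apply Hg. exact Hi.
Qed.

End Bisimulation.

Lemma inhabited_Pi (M : sltl_model) : inhabited {t : trace | Pi M t}.
Proof.
  destruct (Pi_nonempty M) as [t Ht]. exact (inhabits (exist _ t Ht)).
Qed.

Definition trace_s5_model (M : sltl_model) : s5_model :=
  {| W := {t : trace | Pi M t};
     W_nonempty := inhabited_Pi M;
     R := fun _ _ => True;
     R_refl := fun _ => I;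
     R_sym := fun _ _ _ => I;
     R_trans := fun _ _ _ _ _ => I;
     L := fun i x => proj1_sig x i |}.

Lemma sltl_sat_t1 (M : sltl_model) (f : ptl5) : forall (x : {t : trace | Pi M t}) i,
  sltl_sat M (proj1_sig x) i (t1 f) <-> ptl5_sat (trace_s5_model M) i x f.
Proof.
  induction f as [p | g IHg | g IHg h IHh | g IHg | g IHg | g IHg | g IHg h IHh];
    intros x i; simpl.
  - tauto.
  - rewrite IHg. tauto.
  - rewrite IHg, IHh. tauto.
  - split.
    + intros [t [Ht Hg]]. apply lam_star in Ht.
      exists (exist _ t Ht). split; [exact I|]. apply IHg. exact Hg.
    + intros [x' [_ Hg]]. exists (proj1_sig x'). split.
      * apply lam_star. exact (proj2_sig x').
      * apply IHg. exact Hg.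
  - split.
    + intros Hg x' _. apply IHg. apply Hg. apply lam_star. exact (proj2_sig x').
    + intros Hg t Ht. apply lam_star in Ht.
      apply (IHg (exist _ t Ht)). apply Hg. exact I.
  - apply IHg.
  - split; intros [i' [Hle [Hh Hg]]]; exists i'; (split; [exact Hle|]); split.
    + apply IHh. exact Hh.
    + intros i'' Hi. apply IHg. apply Hg. exact Hi.
    + apply IHh. exact Hh.
    + intros i'' Hi. apply IHg. apply Hg. exact Hi.
Qed.

Program Definition uniform_sltl_model (Pi0 : trace -> Prop)
  (HPi0 : exists t, Pi0 t) : sltl_model :=
  {| Pi := Pi0; lam := fun _ => Pi0 |}.
Solve All Obligations with tauto.

Definition shifted_trace (M : s5_model) (n : nat) (v : W M) : trace :=
  fun i => L M (n + i) v.

Definition class_traces (M : s5_model) (n : nat) (w : W M) (t : trace) : Prop :=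
  exists v, R M w v /\ t = shifted_trace M n v.

Lemma class_traces_shifted (M : s5_model) (n : nat) (w v : W M) :
  R M w v -> class_traces M n w (shifted_trace M n v).
Proof. intros Hwv. exists v. split; [exact Hwv | reflexivity]. Qed.

Definition class_sltl_model (M : s5_model) (n : nat) (w : W M) : sltl_model :=
  uniform_sltl_model (class_traces M n w)
    (ex_intro _ _ (class_traces_shifted M n w w (R_refl M w))).

Lemma ptl5_sat_class_sltl_model (M : s5_model) (n : nat) (w : W M) (f : ptl5) :
  ptl5_sat M n w f ->
  sltl_sat (class_sltl_model M n w) (shifted_trace M n w) 0 (t1 f).
Proof.
  intros Hf.
  set (U := class_sltl_model M n w).
  set (Z := fun v (x : W (trace_s5_model U)) =>
              R M w v /\ proj1_sig x = shifted_trace M n v).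
  assert (Hbisim : forall v x i, Z v x ->
            (ptl5_sat M (n + i) v f <-> ptl5_sat (trace_s5_model U) i x f)).
  { apply ptl5_sat_bisim.
    - intros v [t Ht] i p [_ Ht_eq]. cbn in *. subst t. reflexivity.
    - intros v x v' [Hwv _] Hvv'.
      assert (Hwv' : R M w v') by (eapply R_trans; eauto).
      exists (exist _ _ (class_traces_shifted M n w v' Hwv')).
      split; [exact I | split; [exact Hwv' | reflexivity]].
    - intros v x [t [v' [Hwv' ->]]] [Hwv _] _. exists v'. split.
      + eapply R_trans; [apply R_sym; exact Hwv | exact Hwv'].
      + split; [exact Hwv' | reflexivity]. }
  set (x0 := exist (class_traces M n w) _ (class_traces_shifted M n w w (R_refl M w))).
  apply (sltl_sat_t1 U f x0 0).
  apply (Hbisim w x0 0); [split; [apply R_refl | reflexivity]|].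
  rewrite Nat.add_0_r. exact Hf.
Qed.

Theorem lemma1 : forall phi : ptl5,
  ptl5_satisfiable phi <-> sltl_satisfiable (t1 phi).
Proof.
  intros phi. split.
  - intros [M [n [w Hphi]]].
    exists (class_sltl_model M n w), (shifted_trace M n w). split.
    + apply class_traces_shifted, R_refl.
    + apply ptl5_sat_class_sltl_model. exact Hphi.
  - intros [M [sg [Hsg Hphi]]]. exists (trace_s5_model M), 0, (exist _ sg Hsg).
    apply (sltl_sat_t1 M phi (exist _ sg Hsg)). exact Hphi.
Qed.
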